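(* Let $\lambda_0\in\mathfrak h^*_{\mathbb R}$ lie on exactly one $A_2$ vanishing line $P(n_0,\alpha_0)$. Then, with $f$ defined on all of $\mathfrak h^*_{\mathbb R}$ by the formula below, the coefficientwise limits exist and $$\lim_{\epsilon\to0^+}f(\lambda_0+\epsilon\alpha_0)-\lim_{\epsilon\to0^-}f(\lambda_0+\epsilon\alpha_0)=2\,e(\lambda_0)\,x^{n_0\alpha_0}f(\lambda_0-n_0\alpha_0),$$ where $e(\lambda_0)=+1$ if $\alpha_0\in\{\alpha_1,\alpha_2\}$, $e(\lambda_0)=+1$ if $\alpha_0=\alpha_3$ and $\lambda_0+\rho\notin C$, and $e(\lambda_0)=-1$ if $\alpha_0=\alpha_3$ and $\lambda_0+\rho\in C$.
   Context: $\mathfrak g=A_2$ ($\mathfrak{sl}_3$) with simple roots $\alpha_1,\alpha_2$, $(\alpha_1,\alpha_1)=(\alpha_2,\alpha_2)=2$, $(\alpha_1,\alpha_2)=-1$, $\alpha_3=\alpha_1+\alpha_2$, $\Delta_+=\{\alpha_1,\alpha_2,\alpha_3\}$, $\rho=\alpha_3$. $\mathfrak h^*_{\mathbb R}$ is the real span of $\alpha_1,\alpha_2$. The vanishing lines are $P(n,\alpha)=\{\lambda:(\alpha,\lambda+\rho)=n\}$, $n\in\mathbb Z_{\ge1}$, $\alpha\in\Delta_+$. $C=\{\lambda\in\mathfrak h^*_{\mathbb R}:(\alpha_1,\lambda)\ge0,(\alpha_2,\lambda)\ge0\}$. Monomials: $x^{\alpha_1}=x_1$, $x^{\alpha_2}=x_2$,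 $x^{\alpha_3}=x_1x_2$, $x^{n\alpha}=(x^\alpha)^n$. For $\lambda\in\mathfrak h^*_{\mathbb R}$ put $a_i=a_i(\lambda)=\max(0,\lfloor(\alpha_i,\lambda+\rho)\rfloor)$, $i=1,2,3$, and define $f(\lambda)=\tilde f(a_1,a_2,a_3)/D$ where $D=(1-x_1^2)(1-x_2^2)(1-x_1^2x_2^2)$ and $\tilde f(a_1,a_2,a_3)=(1+x_1)(1+x_2)(1+x_1x_2)-2x_1^{a_1+1}(1+x_2)(1+x_1x_2)-2x_2^{a_2+1}(1+x_1)(1+x_1x_2)-2(x_1x_2)^{a_3+1}(1+x_1)(1+x_2)+4x_1^{a_1+1}(x_1x_2)^{\min(a_2,a_3)+1}(1+x_2)+4x_2^{a_2+1}(x_1x_2)^{\min(a_1,a_3)+1}(1+x_1)+4x_1^{\max(a_1,a_3)+1}x_2^{\max(a_2,a_3)+1}(1+x_1x_2)-8x_1^{\min(a_2,a_3)+a_1+2}x_2^{\min(a_1,a_3)+a_2+2}$. *)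

From Stdlib Require Import Reals ZArith.
From Coquelicot Require Import Coquelicot.
Open Scope R_scope.

(* h*_R : an element (c1,c2) stands for c1*alpha1 + c2*alpha2. *)
Definition wt := (R * R)%type.
Definition wadd (u v : wt) : wt := (fst u + fst v, snd u + snd v).
Definition wscal (c : R) (u : wt) : wt := (c * fst u, c * snd u).
(* (alpha1,alpha1)=(alpha2,alpha2)=2, (alpha1,alpha2)=-1 *)
Definition ip (u v : wt) : R :=
  2 * fst u * fst v - fst u * snd v - snd u * fst v + 2 * snd u * snd v.

Inductive proot := A1 | A2 | A3.
Definition rvec (a : proot) : wt :=
  match a with A1 => (1, 0) | A2 => (0, 1) | A3 => (1, 1) end.
Definition alpha1 : wt := rvec A1.
Definition alpha2 : wt := rvec A2.
Definition alpha3 : wt := rvec A3.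
Definition rho : wt := alpha3.

(* lambda lies on the vanishing line P(n, alpha): (alpha, lambda + rho) = n *)
Definition on_line (n : nat) (a : proot) (l : wt) : Prop :=
  ip (rvec a) (wadd l rho) = INR n.

Definition inC (l : wt) : Prop := 0 <= ip alpha1 l /\ 0 <= ip alpha2 l.

(* a_i(lambda) = max(0, floor((alpha_i, lambda+rho)));  Int_part = floor,
   Z.to_nat truncates negatives to 0. *)
Definition aa (a : proot) (l : wt) : nat :=
  Z.to_nat (Int_part (ip (rvec a) (wadd l rho))).

(* Formal power series in x1, x2 with real coefficients:
   s p q = coefficient of x1^p x2^q. *)
Definition series := nat -> nat -> R.
Definition sadd (s t : series) : series := fun p q => s p q + t p q.
Definition sscal (c : R) (s : series) : series := fun p q => c * s p q.
Definition smul (s t : series) : series := fun p q =>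
  sum_f_R0 (fun i => sum_f_R0 (fun j => s i j * t (p - i)%nat (q - j)%nat) q) p.
Definition mono (m k : nat) : series := fun p q =>
  if (Nat.eqb p m && Nat.eqb q k)%bool then 1 else 0.
Definition one : series := mono 0 0.
Definition x1 : series := mono 1 0.
Definition x2 : series := mono 0 1.
Definition xpow (n : nat) (a : proot) : series :=
  match a with A1 => mono n 0 | A2 => mono 0 n | A3 => mono n n end.

(* 1/(1 - x1^2), 1/(1 - x2^2), 1/(1 - x1^2 x2^2) as geometric series *)
Definition geo1 : series := fun p q => if (Nat.even p && Nat.eqb q 0)%bool then 1 else 0.
Definition geo2 : series := fun p q => if (Nat.eqb p 0 && Nat.even q)%bool then 1 else 0.
Definition geo3 : series := fun p q => if (Nat.even p && Nat.eqb p q)%bool then 1 else 0.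
Definition invD : series := smul geo1 (smul geo2 geo3).

Definition ftilde (a1 a2 a3 : nat) : series :=
  let X1 := sadd one x1 in
  let X2 := sadd one x2 in
  let X3 := sadd one (mono 1 1) in
  sadd (smul X1 (smul X2 X3))
  (sadd (sscal (-2) (smul (mono (a1+1) 0) (smul X2 X3)))
  (sadd (sscal (-2) (smul (mono 0 (a2+1)) (smul X1 X3)))
  (sadd (sscal (-2) (smul (mono (a3+1) (a3+1)) (smul X1 X2)))
  (sadd (sscal 4 (smul (mono (a1+1) 0)
                   (smul (mono (Nat.min a2 a3 + 1) (Nat.min a2 a3 + 1)) X2)))
  (sadd (sscal 4 (smul (mono 0 (a2+1))
                   (smul (mono (Nat.min a1 a3 + 1) (Nat.min a1 a3 + 1)) X1)))
  (sadd (sscal 4 (smul (mono (Nat.max a1 a3 + 1) (Nat.max a2 a3 + 1)) X3))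
        (sscal (-8) (mono (Nat.min a2 a3 + a1 + 2) (Nat.min a1 a3 + a2 + 2))))))))).

Definition fA2 (l : wt) : series :=
  smul (ftilde (aa A1 l) (aa A2 l) (aa A3 l)) invD.

Definition esign (a0 : proot) (l0 : wt) : R :=
  match a0 with
  | A3 => (* -1 iff lambda0 + rho in C, i.e. both pairings >= 0 *)
      let m := wadd l0 rho in
      match Rle_dec 0 (ip alpha1 m), Rle_dec 0 (ip alpha2 m) with
      | left _, left _ => -1
      | _, _ => 1
      end
  | _ => 1
  end.

From Stdlib Require Import Reals ZArith Lia Lra FunctionalExtensionality.
From Coquelicot Require Import Coquelicot.
From Pilot Require Import Defs.
Open Scope R_scope.

(* Along the line lambda0 + eps alpha0 only the floor a_i for i = alpha0 moves: the
   other pairings (alpha_i, lambda0 + rho) are not positive integers, and the truncated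
   floor max(0, floor x) is locally constant at every such x.  Hence f is eventually
   constant on each side, with a_{alpha0} = n0 on the right and n0 - 1 on the left,
   and the jump is ftilde at two triples differing in one entry, divided by D.
   Expressing the a_i at lambda0 and at lambda0 - n0 alpha0 through the single integer
   F = floor of the remaining pairing turns the claim into identities between
   polynomials with symbolic exponents, one for each sign pattern of F. *)

Lemma sum_f_R0_zero (n : nat) : sum_f_R0 (fun _ => 0) n = 0.
Proof. induction n as [|n IH]; cbn [sum_f_R0]; [reflexivity | rewrite IH; ring]. Qed.

Lemma sum_f_R0_delta (g : nat -> R) (a p : nat) :
  sum_f_R0 (fun i => if Nat.eqb i a then g i else 0) p = if Nat.leb a p then g a else 0.
Proof.
  induction p as [|p IH]; cbn [sum_f_R0].
  - destruct a; reflexivity.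
  - rewrite IH.
    destruct (Nat.eqb_spec (S p) a), (Nat.leb_spec a p), (Nat.leb_spec a (S p));
      subst; try lia; ring.
Qed.

Lemma sum_f_R0_shift (h : nat -> R) (a p : nat) :
  sum_f_R0 (fun i => if Nat.leb a i then h i else 0) p =
  if Nat.leb a p then sum_f_R0 (fun i => h (a + i)%nat) (p - a) else 0.
Proof.
  induction p as [|p IH]; cbn [sum_f_R0].
  - destruct a; reflexivity.
  - rewrite IH. destruct (Nat.leb_spec a p), (Nat.leb_spec a (S p)); try lia.
    + replace (S p - a)%nat with (S (p - a)) by lia. cbn [sum_f_R0].
      now replace (a + S (p - a))%nat with (S p) by lia.
    + replace a with (S p) by lia. rewrite Nat.sub_diag. cbn [sum_f_R0]. rewrite Nat.add_0_r. ring.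
    + ring.
Qed.

Lemma smul_saddl (s t u : series) : smul (sadd s t) u = sadd (smul s u) (smul t u).
Proof.
  extensionality p; extensionality q. unfold smul, sadd.
  rewrite <- sum_plus. apply sum_eq; intros i _.
  rewrite <- sum_plus. apply sum_eq; intros j _. ring.
Qed.

Lemma smul_saddr (s t u : series) : smul u (sadd s t) = sadd (smul u s) (smul u t).
Proof.
  extensionality p; extensionality q. unfold smul, sadd.
  rewrite <- sum_plus. apply sum_eq; intros i _.
  rewrite <- sum_plus. apply sum_eq; intros j _. ring.
Qed.

Lemma smul_sscall (c : R) (s u : series) : smul (sscal c s) u = sscal c (smul s u).
Proof.
  extensionality p; extensionality q. unfold smul, sscal; cbv beta.
  rewrite scal_sum. apply sum_eq; intros i _.
  rewrite Rmult_comm, scal_sum. apply sum_eq; intros j _. ring.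
Qed.

Lemma smul_sscalr (c : R) (s u : series) : smul u (sscal c s) = sscal c (smul u s).
Proof.
  extensionality p; extensionality q. unfold smul, sscal; cbv beta.
  rewrite scal_sum. apply sum_eq; intros i _.
  rewrite Rmult_comm, scal_sum. apply sum_eq; intros j _. ring.
Qed.

Lemma smul_monoE (a b : nat) (s : series) (p q : nat) :
  smul (mono a b) s p q =
  if (Nat.leb a p && Nat.leb b q)%bool then s (p - a)%nat (q - b)%nat else 0.
Proof.
  unfold smul, mono.
  rewrite (sum_eq _ (fun i => if Nat.eqb i a then
     sum_f_R0 (fun j => if Nat.eqb j b then s (p - i)%nat (q - j)%nat else 0) q else 0)).
  - rewrite !sum_f_R0_delta. now destruct (Nat.leb a p).
  - intros i _. destruct (Nat.eqb i a); simpl.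
    + apply sum_eq; intros j _. destruct (Nat.eqb j b); ring.
    + transitivity (sum_f_R0 (fun _ => 0) q); [apply sum_eq; intros; ring | apply sum_f_R0_zero].
Qed.

Lemma smul_mono_mono (a b c d : nat) : smul (mono a b) (mono c d) = mono (a + c) (b + d).
Proof.
  extensionality p; extensionality q. rewrite smul_monoE. unfold mono.
  destruct (Nat.leb_spec a p), (Nat.leb_spec b q); simpl;
  destruct (Nat.eqb_spec (p - a) c), (Nat.eqb_spec (q - b) d),
    (Nat.eqb_spec p (a + c)), (Nat.eqb_spec q (b + d)); simpl; reflexivity || lia.
Qed.

Lemma smul_mono_assoc (a b : nat) (s t : series) :
  smul (mono a b) (smul s t) = smul (smul (mono a b) s) t.
Proof.
  extensionality p; extensionality q. rewrite smul_monoE. symmetry. unfold smul at 1.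
  rewrite (sum_eq _ (fun i => if Nat.leb a i then
     sum_f_R0 (fun j => if Nat.leb b j then
        s (i - a)%nat (j - b)%nat * t (p - i)%nat (q - j)%nat else 0) q else 0)).
  - rewrite sum_f_R0_shift. destruct (Nat.leb_spec a p); [|reflexivity].
    rewrite (sum_eq _ (fun i => if Nat.leb b q then
       sum_f_R0 (fun j => s i j * t (p - a - i)%nat (q - b - j)%nat) (q - b) else 0)).
    + destruct (Nat.leb b q); [reflexivity | apply sum_f_R0_zero].
    + intros i _. rewrite sum_f_R0_shift. destruct (Nat.leb b q); [|reflexivity].
      apply sum_eq; intros j _. do 2 f_equal; lia.
  - intros i _. destruct (Nat.leb a i) eqn:Hai.
    + apply sum_eq; intros j _. rewrite smul_monoE, Hai. destruct (Nat.leb b j); simpl; ring.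
    + transitivity (sum_f_R0 (fun _ => 0) q); [|apply sum_f_R0_zero].
      apply sum_eq; intros j _. rewrite smul_monoE, Hai. simpl; ring.
Qed.

(* After the min/max branches are fixed, every exponent of [mono] is affine in two
   nat variables [A], [k]; [affine_form] reads off its coefficients by evaluating at
   (0,0), (1,0), (0,1).  Rewriting all exponents to [c + a * A + b * k] lets [ring]
   identify equal monomials; the alias [mono_nf] stops the rewrite from looping. *)
Definition mono_nf := mono.

Lemma mono_nf_eq (e f e' f' : nat) : e = e' -> f = f' -> mono e f = mono_nf e' f'.
Proof. now intros -> ->. Qed.

Ltac affine_form A k e :=
  let g := eval pattern A, k in e in
  match g with ?h _ _ =>
    let c := eval vm_compute in (h 0 0)%nat in
    let a := eval vm_compute in (h 1 0 - h 0 0)%nat in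
    let b := eval vm_compute in (h 0 1 - h 0 0)%nat in
    constr:((c + a * A + b * k)%nat) end.

Ltac normalize_monos A k :=
  repeat match goal with |- context [mono ?e ?f] =>
    let e' := affine_form A k e in let f' := affine_form A k f in
    rewrite (mono_nf_eq e f e' f') by lia end.

Ltac resolve_minmax :=
  repeat match goal with
  | |- context [Nat.min ?x ?y] =>
      (rewrite (Nat.min_l x y) by lia) || (rewrite (Nat.min_r x y) by lia)
  | |- context [Nat.max ?x ?y] =>
      (rewrite (Nat.max_l x y) by lia) || (rewrite (Nat.max_r x y) by lia)
  end.

Ltac ftilde_identity A k :=
  unfold ftilde, Defs.one, x1, x2; cbv zeta;
  repeat rewrite ?smul_saddl, ?smul_saddr, ?smul_sscall, ?smul_sscalr, ?smul_mono_mono;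
  resolve_minmax; extensionality p; extensionality q;
  unfold sadd, sscal; normalize_monos A k; ring.

Lemma ftilde_jump_A1 (n a2 a3 b1 b2 b3 : nat) (F : Z) :
  (1 <= n)%nat -> a2 = Z.to_nat F -> a3 = Z.to_nat (F + Z.of_nat n) ->
  b1 = Z.to_nat (- Z.of_nat n) -> b2 = Z.to_nat (F + Z.of_nat n) -> b3 = Z.to_nat F ->
  sadd (ftilde n a2 a3) (sscal (-1) (ftilde (n - 1) a2 a3)) =
  sscal 2 (smul (mono n 0) (ftilde b1 b2 b3)).
Proof.
  intros Hn H2 H3 -> -> ->. rewrite <- H2, <- H3. replace (Z.to_nat (- Z.of_nat n)) with 0%nat by lia.
  destruct n as [|k]; [lia|]. replace (S k - 1)%nat with k by lia.
  destruct (Z_le_gt_dec 0 F).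
  - replace a3 with (a2 + S k)%nat by lia. clear H2 H3. ftilde_identity a2 k.
  - replace a2 with 0%nat by lia. assert (a3 <= k)%nat by lia. clear H2 H3.
    ftilde_identity a3 k.
Qed.

Lemma ftilde_jump_A2 (n a1 a3 b1 b2 b3 : nat) (F : Z) :
  (1 <= n)%nat -> a1 = Z.to_nat F -> a3 = Z.to_nat (F + Z.of_nat n) ->
  b1 = Z.to_nat (F + Z.of_nat n) -> b2 = Z.to_nat (- Z.of_nat n) -> b3 = Z.to_nat F ->
  sadd (ftilde a1 n a3) (sscal (-1) (ftilde a1 (n - 1) a3)) =
  sscal 2 (smul (mono 0 n) (ftilde b1 b2 b3)).
Proof.
  intros Hn H1 H3 -> -> ->. rewrite <- H1, <- H3. replace (Z.to_nat (- Z.of_nat n)) with 0%nat by lia.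
  destruct n as [|k]; [lia|]. replace (S k - 1)%nat with k by lia.
  destruct (Z_le_gt_dec 0 F).
  - replace a3 with (a1 + S k)%nat by lia. clear H1 H3. ftilde_identity a1 k.
  - replace a1 with 0%nat by lia. assert (a3 <= k)%nat by lia. clear H1 H3.
    ftilde_identity a3 k.
Qed.

Lemma ftilde_jump_A3 (n a1 a2 b1 b2 b3 : nat) (F : Z) (e : R) :
  (1 <= n)%nat -> a1 = Z.to_nat F -> a2 = Z.to_nat (Z.of_nat n - F - 1) ->
  b1 = Z.to_nat (F - Z.of_nat n) -> b2 = Z.to_nat (- F - 1) -> b3 = Z.to_nat (- Z.of_nat n) ->
  e = (if ((0 <=? F) && (F <? Z.of_nat n))%Z%bool then -1 else 1) ->
  sadd (ftilde a1 a2 n) (sscal (-1) (ftilde a1 a2 (n - 1))) =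
  sscal (2 * e) (smul (mono n n) (ftilde b1 b2 b3)).
Proof.
  intros Hn H1 H2 H3 H4 -> ->. replace (Z.to_nat (- Z.of_nat n)) with 0%nat by lia.
  destruct n as [|k]; [lia|]. replace (S k - 1)%nat with k by lia.
  destruct (Z.leb_spec 0 F), (Z.ltb_spec F (Z.of_nat (S k))); simpl; [| | |lia].
  - replace b1 with 0%nat by lia. replace b2 with 0%nat by lia.
    replace k with (a1 + a2)%nat by lia. clear H1 H2 H3 H4. ftilde_identity a1 a2.
  - replace b2 with 0%nat by lia. replace a2 with 0%nat by lia.
    replace a1 with (S k + b1)%nat by lia. clear H1 H2 H3 H4. ftilde_identity b1 k.
  - replace b1 with 0%nat by lia. replace a1 with 0%nat by lia.
    replace a2 with (S k + b2)%nat by lia. clear H1 H2 H3 H4. ftilde_identity b2 k.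
Qed.

Definition floor0 (x : R) : nat := Z.to_nat (Int_part x).

Lemma floor0_spec (x : R) (z : Z) : IZR z <= x < IZR z + 1 -> floor0 x = Z.to_nat z.
Proof. intro H. unfold floor0. f_equal. symmetry. apply Int_part_spec. lra. Qed.

Lemma floor0_nat (n : nat) (x : R) : 0 <= x < 1 -> floor0 (INR n + x) = n.
Proof.
  intro H. rewrite (floor0_spec _ (Z.of_nat n)); [apply Nat2Z.id|].
  rewrite <- INR_IZR_INZ. lra.
Qed.

Lemma floor0_nat_pred (n : nat) (x : R) : -1 <= x < 0 -> floor0 (INR n + x) = (n - 1)%nat.
Proof.
  intro H. rewrite (floor0_spec _ (Z.of_nat n - 1)); [lia|].
  rewrite minus_IZR, <- INR_IZR_INZ. lra.
Qed.

(* At an integer [c <= 0] the floor jumps, but both values truncate to [0]. *)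
Lemma floor0_locally_const (c : R) :
  (forall n : nat, (1 <= n)%nat -> c <> INR n) ->
  locally c (fun y => floor0 y = floor0 c).
Proof.
  intro Hc. destruct (base_Int_part c) as [Hlo Hhi].
  set (z := Int_part c) in *.
  destruct (Req_dec (IZR z) c) as [Hint|Hfrac].
  - assert (Hz : (z <= 0)%Z).
    { destruct (Z_le_gt_dec z 0) as [|Hpos]; [assumption|].
      exfalso. apply (Hc (Z.to_nat z)); [lia|].
      rewrite INR_IZR_INZ, Z2Nat.id by lia. auto. }
    pose proof (IZR_le _ _ Hz) as HzR.
    exists (mkposreal _ Rlt_0_1). intros y Hy. change (Rabs (y - c) < 1) in Hy.
    apply Rabs_def2 in Hy as [Hy1 Hy2].
    destruct (base_Int_part y) as [Hy3 Hy4].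
    assert (Int_part y <= 0)%Z by (apply Z.lt_succ_r, lt_IZR; rewrite succ_IZR; lra).
    unfold floor0. fold z. lia.
  - assert (Hd : 0 < Rmin (c - IZR z) (IZR z + 1 - c)) by (apply Rmin_glb_lt; lra).
    exists (mkposreal _ Hd). intros y Hy.
    change (Rabs (y - c) < Rmin (c - IZR z) (IZR z + 1 - c)) in Hy.
    apply Rabs_def2 in Hy as [Hy1 Hy2].
    pose proof (Rmin_l (c - IZR z) (IZR z + 1 - c)).
    pose proof (Rmin_r (c - IZR z) (IZR z + 1 - c)).
    rewrite (floor0_spec y z), (floor0_spec c z); [reflexivity | lra | lra].
Qed.

Lemma aa_floor0 (i : proot) (l : wt) : aa i l = floor0 (ip (rvec i) (wadd l rho)).
Proof. reflexivity. Qed.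

Lemma ip_translate (i : proot) (l v : wt) (eps : R) :
  ip (rvec i) (wadd (wadd l (wscal eps v)) rho) = ip (rvec i) (wadd l rho) + eps * ip (rvec i) v.
Proof. unfold ip, wadd, wscal; simpl; ring. Qed.

Lemma ip_rvec_diag (i : proot) : ip (rvec i) (rvec i) = 2.
Proof. destruct i; unfold ip; simpl; ring. Qed.

Lemma near_aa_off_line (i : proot) (l v : wt) :
  (forall n : nat, (1 <= n)%nat -> ~ on_line n i l) ->
  locally 0 (fun eps => aa i (wadd l (wscal eps v)) = aa i l).
Proof.
  intro Hoff. set (c := ip (rvec i) (wadd l rho)). set (k := ip (rvec i) v).
  assert (Hcont : filterlim (fun eps => c + eps * k) (locally 0) (locally c)).
  { replace (locally c) with (locally (c + 0 * k)) by (f_equal; ring).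
    apply (continuous_plus (fun _ => c) (fun eps => eps * k)).
    - apply continuous_const.
    - apply (continuous_mult (fun eps => eps) (fun _ => k)).
      + apply continuous_id.
      + apply continuous_const. }
  eapply filter_imp; [|apply Hcont, floor0_locally_const, Hoff].
  intros eps Heps. now rewrite !aa_floor0, ip_translate.
Qed.

Lemma aa_right_of_line (n : nat) (i : proot) (l : wt) :
  on_line n i l -> at_right 0 (fun eps => aa i (wadd l (wscal eps (rvec i))) = n).
Proof.
  intro Hon. assert (Hd : 0 < 1 / 2) by lra.
  exists (mkposreal _ Hd). intros eps Heps Hpos.
  change (Rabs (eps - 0) < 1 / 2) in Heps. apply Rabs_def2 in Heps.
  rewrite aa_floor0, ip_translate, ip_rvec_diag, Hon. apply floor0_nat. lra.
Qed.

Lemma aa_left_of_line (n : nat) (i : proot) (l : wt) :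
  on_line n i l -> at_left 0 (fun eps => aa i (wadd l (wscal eps (rvec i))) = (n - 1)%nat).
Proof.
  intro Hon. assert (Hd : 0 < 1 / 2) by lra.
  exists (mkposreal _ Hd). intros eps Heps Hneg.
  change (Rabs (eps - 0) < 1 / 2) in Heps. apply Rabs_def2 in Heps.
  rewrite aa_floor0, ip_translate, ip_rvec_diag, Hon. apply floor0_nat_pred. lra.
Qed.

Lemma filterlim_eventually_const {T : Type} {F : (T -> Prop) -> Prop} {FF : Filter F}
  (f : T -> R) (c : R) :
  F (fun x => f x = c) -> filterlim f F (locally c).
Proof.
  intro Hf. apply (filterlim_ext_loc (fun _ => c)); [|apply filterlim_const].
  eapply filter_imp; [|exact Hf]. now intros x ->.
Qed.

Lemma smul_jump (S T B u : series) (c : R) (n : nat) (a : proot) :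
  sadd T (sscal (-1) S) = sscal c (smul (xpow n a) B) ->
  forall p q : nat, smul T u p q - smul S u p q = sscal c (smul (xpow n a) (smul B u)) p q.
Proof.
  intros H p q.
  replace (smul (xpow n a) (smul B u)) with (smul (smul (xpow n a) B) u)
    by (destruct a; symmetry; apply smul_mono_assoc).
  rewrite <- smul_sscall, <- H, smul_saddl, smul_sscall. unfold sadd, sscal. ring.
Qed.

Lemma near_fA2 {F : (R -> Prop) -> Prop} {FF : Filter F}
  (l : R -> wt) (t : proot -> nat) (p q : nat) :
  (forall i : proot, F (fun eps => aa i (l eps) = t i)) ->
  F (fun eps => fA2 (l eps) p q = smul (ftilde (t A1) (t A2) (t A3)) invD p q).
Proof.
  intro Ht. generalize (filter_and _ _ (Ht A1) (filter_and _ _ (Ht A2) (Ht A3))).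
  apply filter_imp. intros eps (E1 & E2 & E3). unfold fA2. now rewrite E1, E2, E3.
Qed.

Lemma aa_spec (i : proot) (l : wt) (z : Z) :
  IZR z <= ip (rvec i) (wadd l rho) < IZR z + 1 -> aa i l = Z.to_nat z.
Proof. apply floor0_spec. Qed.

Ltac solve_aa :=
  apply aa_spec; unfold on_line, ip, wadd, wscal, rho, alpha1, alpha2, alpha3, rvec in *;
  simpl in *; rewrite ?plus_IZR, ?minus_IZR, ?opp_IZR, <- ?INR_IZR_INZ; lra.

Lemma ip_rvec_A3 (x : wt) : ip (rvec A3) x = ip alpha1 x + ip alpha2 x.
Proof. unfold ip; simpl; ring. Qed.

Lemma esign_A3 (l : wt) (n : nat) (F : Z) :
  ip alpha1 (wadd l rho) + ip alpha2 (wadd l rho) = INR n ->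
  IZR F < ip alpha1 (wadd l rho) < IZR F + 1 ->
  esign A3 l = if ((0 <=? F) && (F <? Z.of_nat n))%Z%bool then -1 else 1.
Proof.
  rewrite INR_IZR_INZ. unfold esign.
  set (c1 := ip alpha1 (wadd l rho)). set (c2 := ip alpha2 (wadd l rho)). intros Hsum [HF1 HF2].
  destruct (Z.leb_spec 0 F) as [HF0|HF0], (Z.ltb_spec F (Z.of_nat n)) as [Hn|Hn]; simpl.
  - apply IZR_le in HF0. apply Zlt_le_succ, IZR_le in Hn. rewrite succ_IZR in Hn.
    destruct (Rle_dec 0 c1), (Rle_dec 0 c2); reflexivity || lra.
  - apply IZR_le in Hn. destruct (Rle_dec 0 c1), (Rle_dec 0 c2); reflexivity || lra.
  - apply Zlt_le_succ, IZR_le in HF0. rewrite succ_IZR in HF0.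
    destruct (Rle_dec 0 c1); [lra | reflexivity].
  - apply Zlt_le_succ, IZR_le in HF0. rewrite succ_IZR in HF0.
    destruct (Rle_dec 0 c1); [lra | reflexivity].
Qed.

Definition proot_eq_dec (a b : proot) : {a = b} + {a <> b}.
Proof. decide equality. Defined.

Definition aa_set (a0 : proot) (v : nat) (l : wt) (i : proot) : nat :=
  if proot_eq_dec i a0 then v else aa i l.

Section Crossing.

Variables (l0 : wt) (n0 : nat) (a0 : proot).
Hypothesis n0_pos : (1 <= n0)%nat.
Hypothesis l0_on_line : on_line n0 a0 l0.
Hypothesis l0_on_one_line :
  forall (n : nat) (a : proot), (1 <= n)%nat -> on_line n a l0 -> n = n0 /\ a = a0.

Lemma near_aa_off_line_a0 (i : proot) : i <> a0 ->
  locally 0 (fun eps => aa i (wadd l0 (wscal eps (rvec a0))) = aa i l0).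
Proof.
  intro Hi. apply near_aa_off_line. intros n Hn Hon.
  now apply Hi, (l0_on_one_line n i Hn Hon).
Qed.

Lemma near_aa_right (i : proot) :
  at_right 0 (fun eps => aa i (wadd l0 (wscal eps (rvec a0))) = aa_set a0 n0 l0 i).
Proof.
  unfold aa_set. destruct (proot_eq_dec i a0) as [->|Hi].
  - now apply aa_right_of_line.
  - now apply filter_le_within, near_aa_off_line_a0.
Qed.

Lemma near_aa_left (i : proot) :
  at_left 0 (fun eps => aa i (wadd l0 (wscal eps (rvec a0))) = aa_set a0 (n0 - 1) l0 i).
Proof.
  unfold aa_set. destruct (proot_eq_dec i a0) as [->|Hi].
  - now apply aa_left_of_line.
  - now apply filter_le_within, near_aa_off_line_a0.
Qed.

(* A pairing [(alpha_1, l0 + rho) = k] with [k] an integer would put [l0] on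
   [P(k, alpha_1)] or on [P(n0 - k, alpha_2)]. *)
Lemma ip_alpha1_not_integer : a0 = A3 ->
  IZR (Int_part (ip alpha1 (wadd l0 rho))) <> ip alpha1 (wadd l0 rho).
Proof.
  intros Ha0 E. subst a0. set (F := Int_part (ip alpha1 (wadd l0 rho))) in E.
  pose proof l0_on_line as Hsum. unfold on_line in Hsum. rewrite ip_rvec_A3 in Hsum.
  destruct (Z_le_gt_dec F 0) as [HF|HF].
  - destruct (l0_on_one_line (Z.to_nat (Z.of_nat n0 - F)) A2) as [_ Habs]; [lia| |discriminate].
    unfold on_line. rewrite INR_IZR_INZ, Z2Nat.id, minus_IZR, <- INR_IZR_INZ by lia.
    change (rvec A2) with alpha2. lra.
  - destruct (l0_on_one_line (Z.to_nat F) A1) as [_ Habs]; [lia| |discriminate].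
    unfold on_line. rewrite INR_IZR_INZ, Z2Nat.id by lia. exact (eq_sym E).
Qed.

Lemma ftilde_jump :
  sadd (ftilde (aa_set a0 n0 l0 A1) (aa_set a0 n0 l0 A2) (aa_set a0 n0 l0 A3))
    (sscal (-1) (ftilde (aa_set a0 (n0 - 1) l0 A1) (aa_set a0 (n0 - 1) l0 A2)
                        (aa_set a0 (n0 - 1) l0 A3))) =
  sscal (2 * esign a0 l0) (smul (xpow n0 a0)
    (ftilde (aa A1 (wadd l0 (wscal (- INR n0) (rvec a0))))
            (aa A2 (wadd l0 (wscal (- INR n0) (rvec a0))))
            (aa A3 (wadd l0 (wscal (- INR n0) (rvec a0)))))).
Proof.
  pose proof ip_alpha1_not_integer as Hfrac.
  destruct a0; unfold aa_set; simpl; rewrite ?Rmult_1_r.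
  - destruct (base_Int_part (ip alpha2 (wadd l0 rho))).
    apply (ftilde_jump_A1 _ _ _ _ _ _ (Int_part (ip alpha2 (wadd l0 rho))) n0_pos); solve_aa.
  - destruct (base_Int_part (ip alpha1 (wadd l0 rho))).
    apply (ftilde_jump_A2 _ _ _ _ _ _ (Int_part (ip alpha1 (wadd l0 rho))) n0_pos); solve_aa.
  - specialize (Hfrac eq_refl). destruct (base_Int_part (ip alpha1 (wadd l0 rho))).
    apply (ftilde_jump_A3 _ _ _ _ _ _ (Int_part (ip alpha1 (wadd l0 rho))) _ n0_pos); try solve_aa.
    apply esign_A3.
    + rewrite <- ip_rvec_A3. exact l0_on_line.
    + lra.
Qed.

End Crossing.

Theorem lemma5 (l0 : wt) (n0 : nat) (a0 : proot) :
  (1 <= n0)%nat ->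
  on_line n0 a0 l0 ->
  (forall (n : nat) (a : proot), (1 <= n)%nat -> on_line n a l0 -> n = n0 /\ a = a0) ->
  exists Lp Lm : series,
    (forall p q : nat,
       filterlim (fun eps => fA2 (wadd l0 (wscal eps (rvec a0))) p q)
                 (at_right 0) (locally (Lp p q))) /\
    (forall p q : nat,
       filterlim (fun eps => fA2 (wadd l0 (wscal eps (rvec a0))) p q)
                 (at_left 0) (locally (Lm p q))) /\
    (forall p q : nat,
       Lp p q - Lm p q =
       sscal (2 * esign a0 l0)
             (smul (xpow n0 a0) (fA2 (wadd l0 (wscal (- INR n0) (rvec a0))))) p q).
Proof.
  intros Hn Hon Huniq.
  set (right_value := aa_set a0 n0 l0). set (left_value := aa_set a0 (n0 - 1) l0).
  exists (smul (ftilde (right_value A1) (right_value A2) (right_value A3)) invD),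
         (smul (ftilde (left_value A1) (left_value A2) (left_value A3)) invD).
  split; [|split]; intros p q.
  - apply filterlim_eventually_const, near_fA2, near_aa_right; assumption.
  - apply filterlim_eventually_const, near_fA2, near_aa_left; assumption.
  - apply smul_jump, ftilde_jump; assumption.
Qed.
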